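(* Let $\epsilon>0$ and let $\Lambda_\epsilon\subset\mathbb{R}^d$ be an $\epsilon$-lattice. Then every $\mathbf{x}\in\mathbb{R}^d$ lies in the convex hull of $B_{7\epsilon}(\mathbf{x})\cap\Lambda_\epsilon$.
   Context: $\|\cdot\|$ is a fixed one of the $\ell_1,\ell_2,\ell_\infty$ norms and $B_r(\mathbf{x})=\{\mathbf{z}:\|\mathbf{z}-\mathbf{x}\|\le r\}$. A lattice is the set of integer combinations of a basis of $\mathbb{R}^d$. Its packing radius $r_p$ is the supremum of $r$ such that balls of radius $r$ around distinct lattice points are disjoint; its cover radius $r_c$ is the infimum of $r$ such that balls of radius $r$ around lattice points cover $\mathbb{R}^d$. An $\epsilon$-lattice is a lattice with $\epsilon=r_p\le r_c\le3\epsilon$. *)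

From HB Require Import structures.
From mathcomp Require Import all_boot all_order all_algebra.
From mathcomp Require Import boolp classical_sets reals.
Set Implicit Arguments. Unset Strict Implicit. Unset Printing Implicit Defensive.
Import Order.TTheory GRing.Theory Num.Theory.
Local Open Scope ring_scope.
Local Open Scope classical_set_scope.

Inductive normkind := L1 | L2 | Linf.

Definition pnorm (R : realType) (p : normkind) (d : nat) (x : 'rV[R]_d) : R :=
  match p with
  | L1 => \sum_(i < d) `|x ord0 i|
  | L2 => Num.sqrt (\sum_(i < d) (x ord0 i) ^+ 2)
  | Linf => \big[Num.max/0]_(i < d) `|x ord0 i|
  end.

Definition ball_p (R : realType) (p : normkind) (d : nat) (x : 'rV[R]_d) (r : R)
  : set 'rV[R]_d := [set z | pnorm p (z - x) <= r].

Definition lattice (R : realType) (d : nat) (B : 'M[R]_d) : set 'rV[R]_d :=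
  [set v | exists z : 'I_d -> int, v = \sum_(i < d) (z i)%:~R *: row i B].

Definition packing_radius (R : realType) (p : normkind) (d : nat) (B : 'M[R]_d) : R :=
  sup [set r : R | forall u v, lattice B u -> lattice B v -> u <> v ->
                   ball_p p u r `&` ball_p p v r = set0].

Definition cover_radius (R : realType) (p : normkind) (d : nat) (B : 'M[R]_d) : R :=
  inf [set r : R | forall x : 'rV[R]_d, exists u, lattice B u /\ ball_p p u r x].

Definition eps_lattice (R : realType) (p : normkind) (d : nat) (B : 'M[R]_d) (eps : R) : Prop :=
  packing_radius p B = eps /\ eps <= cover_radius p B /\ cover_radius p B <= 3 * eps.

Definition conv_hull (R : realType) (d : nat) (S : set 'rV[R]_d) : set 'rV[R]_d :=
  [set x | exists (n : nat) (pt : 'I_n -> 'rV[R]_d) (lam : 'I_n -> R),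
      (forall i, S (pt i)) /\ (forall i, 0 <= lam i) /\
      \sum_(i < n) lam i = 1 /\ x = \sum_(i < n) lam i *: pt i].

(* A point x lies in a convex set C of R^d as soon as every nonzero linear
   functional c takes a value > c(x) somewhere on C.  This elementary
   separation principle is proved by freezing the coordinates of x one at a
   time: if x_k is strictly straddled by points of C, the functional
   g - T e_k, with T the critical slope (a supremum), reduces the dimension.
   Take for C the convex hull of the lattice points of B_t(x), with t larger
   than twice the covering radius r.  If w is a unit vector on which c attains
   its dual norm, a lattice point u within r of x + (t - r) w lies in B_t(x)
   and satisfies c(u - x) >= (t - 2 r) c(w) > 0.  Since r <= 3 eps < 7 eps / 2,
   t = 7 eps works. *)

From mathcomp Require Import all_boot all_order all_algebra.
From mathcomp Require Import boolp classical_sets reals.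
From mathcomp Require Import ring lra.
Import Order.TTheory GRing.Theory Num.Theory.
Local Open Scope ring_scope.
Local Open Scope classical_set_scope.

Set Implicit Arguments. Unset Strict Implicit. Unset Printing Implicit Defensive.

Section Dot.
Variables (R : realType) (d : nat).
Implicit Types (a b c u v x : 'rV[R]_d) (s t : R).

Definition dot c v : R := \sum_(i < d) c ord0 i * v ord0 i.

Lemma dotC u v : dot u v = dot v u.
Proof. by apply: eq_bigr => i _; rewrite mulrC. Qed.

Lemma dotDr c u v : dot c (u + v) = dot c u + dot c v.
Proof. by rewrite /dot -big_split; apply: eq_bigr => i _; rewrite mxE mulrDr. Qed.

Lemma dotZr c s v : dot c (s *: v) = s * dot c v.
Proof. by rewrite /dot mulr_sumr; apply: eq_bigr => i _; rewrite mxE mulrCA. Qed.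

Lemma dotBr c u v : dot c (u - v) = dot c u - dot c v.
Proof. by rewrite dotDr -scaleN1r dotZr mulN1r. Qed.

Lemma dotDl c u v : dot (u + v) c = dot u c + dot v c.
Proof. by rewrite !(dotC _ c) dotDr. Qed.

Lemma dotZl c s v : dot (s *: v) c = s * dot v c.
Proof. by rewrite !(dotC _ c) dotZr. Qed.

Lemma dotBl c u v : dot (u - v) c = dot u c - dot v c.
Proof. by rewrite !(dotC _ c) dotBr. Qed.

Lemma dot_deltal k v : dot (delta_mx ord0 k) v = v ord0 k.
Proof.
rewrite /dot (bigD1 k) //= big1 => [|i ik]; first by rewrite mxE !eqxx mul1r addr0.
by rewrite mxE (negbTE ik) andbF mul0r.
Qed.

Lemma dot_convex_comb c a b x t :
  dot c (t *: a + (1 - t) *: b - x) = t * dot c (a - x) + (1 - t) * dot c (b - x).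
Proof. by rewrite !dotBr dotDr !dotZr; ring. Qed.

Lemma dot_le_sum_norm c v : dot c v <= \sum_(i < d) `|c ord0 i| * `|v ord0 i|.
Proof. by apply: ler_sum => i _; rewrite -normrM ler_norm. Qed.

Lemma dot_ge0 v : 0 <= dot v v.
Proof. by apply: sumr_ge0 => i _; rewrite -expr2 sqr_ge0. Qed.

Lemma dot_sqr_le u v : dot u v ^+ 2 <= dot u u * dot v v.
Proof.
pose D i j := u ord0 i * v ord0 j - u ord0 j * v ord0 i.
pose A i j := u ord0 i * u ord0 i * (v ord0 j * v ord0 j).
have lagrange : \sum_(i < d) \sum_(j < d) D i j ^+ 2
    = 2 * (dot u u * dot v v - dot u v ^+ 2).
  transitivity (\sum_(i < d) \sum_(j < d) A i j + \sum_(i < d) \sum_(j < d) A j i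
      - 2 * \sum_(i < d) \sum_(j < d) (u ord0 i * v ord0 i * (u ord0 j * v ord0 j))).
    rewrite -big_split mulr_sumr -sumrB; apply: eq_bigr => i _.
    rewrite -big_split mulr_sumr -sumrB; apply: eq_bigr => j _.
    by rewrite /D /A /=; ring.
  rewrite [X in _ + X - _]exchange_big /dot expr2 !big_distrlr /=.
  ring.
have : 0 <= \sum_(i < d) \sum_(j < d) D i j ^+ 2.
  by apply: sumr_ge0 => i _; apply: sumr_ge0 => j _; exact: sqr_ge0.
by rewrite lagrange pmulr_rge0 // subr_ge0.
Qed.

End Dot.

Section Norms.
Variables (R : realType) (d : nat).
Implicit Types (c u v w : 'rV[R]_d) (p : normkind) (s : R).

Lemma pnorm2E v : pnorm L2 v = Num.sqrt (dot v v).
Proof. by congr Num.sqrt; apply: eq_bigr => i _; rewrite expr2. Qed.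

Lemma dot_le_pnorm2 u v : dot u v <= pnorm L2 u * pnorm L2 v.
Proof.
rewrite !pnorm2E -sqrtrM ?dot_ge0 // (le_trans (ler_norm _)) //.
by rewrite -sqrtr_sqr ler_wsqrtr // dot_sqr_le.
Qed.

Lemma pnorm_ge0 p v : 0 <= pnorm p v.
Proof.
by case: p => /=; [exact: sumr_ge0 | exact: sqrtr_ge0 | exact: bigmax_ge_id].
Qed.

Lemma pnormZ p s v : pnorm p (s *: v) = `|s| * pnorm p v.
Proof.
case: p => /=.
- by rewrite mulr_sumr; apply: eq_bigr => i _; rewrite mxE normrM.
- rewrite -sqrtr_sqr -sqrtrM ?sqr_ge0 // mulr_sumr.
  by congr Num.sqrt; apply: eq_bigr => i _; rewrite mxE exprMn.
- elim/big_rec2: _ => [|i m1 m2 _ ->]; first by rewrite mulr0.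
  by rewrite mxE normrM maxr_pMr.
Qed.

Lemma pnormN p v : pnorm p (- v) = pnorm p v.
Proof. by rewrite -scaleN1r pnormZ normrN1 mul1r. Qed.

Lemma pnormD p u v : pnorm p (u + v) <= pnorm p u + pnorm p v.
Proof.
case: p.
- rewrite /= -big_split; apply: ler_sum => i _; rewrite mxE; exact: ler_normD.
- have nu := pnorm_ge0 L2 u; have nv := pnorm_ge0 L2 v.
  have uv := dot_le_pnorm2 u v.
  rewrite -[leRHS](ger0_norm (addr_ge0 nu nv)) -sqrtr_sqr [leLHS]pnorm2E ler_wsqrtr //.
  rewrite sqrrD !pnorm2E !sqr_sqrtr ?dot_ge0 // -!pnorm2E dotDl !dotDr (dotC v u).
  lra.
- apply: bigmax_le => [|i _]; first by rewrite addr_ge0 ?pnorm_ge0.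
  rewrite mxE (le_trans (ler_normD _ _)) // lerD //; exact: le_bigmax.
Qed.

End Norms.

Section Norming.
Variables (R : realType) (d : nat).
Implicit Types (c v w : 'rV[R]_d) (p : normkind).

Definition norming p c w :=
  [/\ pnorm p w <= 1, 0 < dot c w & forall v, dot c v <= dot c w * pnorm p v].

Lemma row_neq0_entry c : c != 0 -> exists i, c ord0 i != 0.
Proof.
move=> c0; apply/existsP; apply: contraNT c0 => /existsPn c0.
by apply/eqP/rowP => i; rewrite mxE; apply/eqP/negPn/c0.
Qed.

Lemma norming_L1 c i : c ord0 i != 0 -> exists w, norming L1 c w.
Proof.
move=> ci; have [j _ jmax] := arg_maxP (fun j => `|c ord0 j|) (erefl : xpredT i).
have cj : c ord0 j != 0.
  by rewrite -normr_gt0 (lt_le_trans _ (jmax i erefl)) // normr_gt0.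
have cw : dot c (Num.sg (c ord0 j) *: delta_mx ord0 j) = `|c ord0 j|.
  by rewrite dotZr dotC dot_deltal -normrEsg.
exists (Num.sg (c ord0 j) *: delta_mx ord0 j); split; rewrite ?cw ?normr_gt0 //.
- rewrite pnormZ normr_sg cj mul1r /= (bigD1 j) //= big1 => [|k kj].
    by rewrite mxE !eqxx normr1 addr0.
  by rewrite mxE (negbTE kj) andbF normr0.
- move=> v; rewrite (le_trans (dot_le_sum_norm c v)) //= mulr_sumr.
  by apply: ler_sum => k _; rewrite ler_wpM2r //; exact: jmax.
Qed.

Lemma norming_L2 c i : c ord0 i != 0 -> exists w, norming L2 c w.
Proof.
move=> ci; set K := pnorm L2 c.
have cc : 0 < dot c c.
  rewrite /dot (bigD1 i) //= ltr_wpDr //.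
    by apply: sumr_ge0 => j _; rewrite -expr2 sqr_ge0.
  by rewrite -expr2 lt_def sqr_ge0 sqrf_eq0 ci.
have K0 : 0 < K by rewrite /K pnorm2E sqrtr_gt0.
have cw : dot c (K^-1 *: c) = K.
  by rewrite dotZr -[dot c c](sqr_sqrtr (dot_ge0 c)) -pnorm2E -/K expr2 mulKf ?gt_eqF.
exists (K^-1 *: c); split; rewrite ?cw //.
- by rewrite pnormZ -/K ger0_norm ?mulVf ?gt_eqF // invr_ge0 ltW.
- exact: dot_le_pnorm2.
Qed.

Lemma norming_Linf c i : c ord0 i != 0 -> exists w, norming Linf c w.
Proof.
move=> ci; have cw : dot c (\row_j Num.sg (c ord0 j)) = \sum_j `|c ord0 j|.
  by apply: eq_bigr => j _; rewrite mxE normrEsg mulrC.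
exists (\row_j Num.sg (c ord0 j)); split; rewrite ?cw.
- by apply: bigmax_le => // j _; rewrite mxE normr_sg lern1 leq_b1.
- by rewrite (bigD1 i) //= ltr_wpDr ?sumr_ge0 ?normr_gt0.
- move=> v; rewrite (le_trans (dot_le_sum_norm c v)) // mulr_suml.
  by apply: ler_sum => j _; rewrite ler_wpM2l //; exact: le_bigmax.
Qed.

Lemma exists_norming p c : c != 0 -> exists w, norming p c w.
Proof.
move=> /row_neq0_entry[i ci].
by case: p; [exact: norming_L1 ci | exact: norming_L2 ci | exact: norming_Linf ci].
Qed.

End Norming.

Section ConvexHull.
Variables (R : realType) (d : nat).

Definition convex (C : set 'rV[R]_d) :=
  forall a b t, C a -> C b -> 0 <= t <= 1 -> C (t *: a + (1 - t) *: b).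

Variable S : set 'rV[R]_d.

Lemma conv_hull_sub : S `<=` conv_hull S.
Proof.
move=> u Su; exists 1%N, (fun=> u), (fun=> 1).
by split=> //; split=> //; rewrite !big_ord1 scale1r.
Qed.

Lemma convex_conv_hull : convex (conv_hull S).
Proof.
move=> _ _ t [n [a [la [Sa [la0 [la1 ->]]]]]] [m [b [lb [Sb [lb0 [lb1 ->]]]]]].
move=> /andP[t0 t1].
pose pt k := match split k with inl i => a i | inr j => b j end.
pose lam k := match split k with inl i => t * la i | inr j => (1 - t) * lb j end.
have splitl i : split (lshift m i) = inl i by rewrite -[RHS](unsplitK (inl i)).
have splitr j : split (rshift n j) = inr j by rewrite -[RHS](unsplitK (inr j)).
exists (n + m)%N, pt, lam; split; [|split; [|split]].
- by move=> k; rewrite /pt; case: (split k).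
- by move=> k; rewrite /lam; case: (split k) => i; rewrite mulr_ge0 ?subr_ge0.
- rewrite big_split_ord /lam (eq_bigr (fun i => t * la i)) => [|i _]; last first.
    by rewrite splitl.
  rewrite (eq_bigr (fun j => (1 - t) * lb j)) => [|j _]; last by rewrite splitr.
  by rewrite -!mulr_sumr la1 lb1 /= !mulr1 subrKC.
- rewrite [RHS]big_split_ord !scaler_sumr /lam /pt /=.
  by congr (_ + _); apply: eq_bigr => i _; rewrite ?splitl ?splitr scalerA.
Qed.

End ConvexHull.

Section Separation.
Variables (R : realType) (d : nat) (C : set 'rV[R]_d) (x : 'rV[R]_d).
Hypothesis convexC : convex C.

Definition slice k :=
  [set z | C z /\ forall i : 'I_d, (k <= i)%N -> z ord0 i = x ord0 i].

Definition unseparated k := forall c : 'rV[R]_d, c != 0 ->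
  (forall i : 'I_d, (k <= i)%N -> c ord0 i = 0) ->
  exists2 z, slice k z & 0 < dot c (z - x).

Lemma slice_top z : C z -> slice d z.
Proof. by split=> // i; rewrite leqNgt ltn_ord. Qed.

Section Step.
Variable k : 'I_d.
Local Notation e := (delta_mx ord0 k : 'rV[R]_d).

Lemma slice_crossing a b : slice k.+1 a -> slice k.+1 b ->
  b ord0 k < x ord0 k < a ord0 k ->
  exists2 t, 0 <= t <= 1 & slice k (t *: a + (1 - t) *: b).
Proof.
move=> [Ca ax] [Cb bx] /andP[bk ak].
have ab : 0 < a ord0 k - b ord0 k by rewrite subr_gt0 (lt_trans bk ak).
pose t := (x ord0 k - b ord0 k) / (a ord0 k - b ord0 k).
have tE : t * (a ord0 k - b ord0 k) = x ord0 k - b ord0 k by rewrite divfK ?gt_eqF.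
have t01 : 0 <= t <= 1.
  rewrite divr_ge0 ?(ltW ab) ?subr_ge0 ?(ltW bk) //=.
  by rewrite -(ler_pM2r ab) tE mul1r lerD2r ltW.
exists t => //; split; first exact: convexC.
move=> i; rewrite leq_eqVlt => /orP[/eqP/val_inj <-|ki]; rewrite !mxE.
  by rewrite -[RHS](subrK (b ord0 k)) -tE; ring.
by rewrite ax // bx //; ring.
Qed.

Definition slope g z := dot g (z - x) / (z ord0 k - x ord0 k).

Lemma slope_le g a b : (forall z, slice k z -> dot g (z - x) <= 0) ->
  slice k.+1 a -> slice k.+1 b -> b ord0 k < x ord0 k < a ord0 k ->
  slope g a <= slope g b.
Proof.
move=> gle Sa Sb bxa; have [t t01 St] := slice_crossing Sa Sb bxa.
have := gle _ St; rewrite dot_convex_comb.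
have := St.2 k (leqnn _); rewrite !mxE.
move: bxa t01 => /andP[bk ak] /andP[t0 t1].
rewrite /slope; set ga := dot g (a - x); set gb := dot g (b - x).
rewrite ler_pdivrMr ?subr_gt0 // mulrAC ler_ndivlMr ?subr_lt0 //.
nra.
Qed.

Lemma scale_delta_eq0 s (i : 'I_d) : (k < i)%N -> (s *: e) ord0 i = 0.
Proof. by move=> ki; rewrite !mxE eqxx -val_eqE /= (gtn_eqF ki) mulr0. Qed.

Lemma slice_succ z : slice k.+1 z -> z ord0 k = x ord0 k -> slice k z.
Proof.
move=> [Cz zx] zk; split=> // i.
by rewrite leq_eqVlt => /orP[/eqP/val_inj <- // | /zx].
Qed.

Lemma unseparated_straddle : unseparated k.+1 ->
  exists a b, [/\ slice k.+1 a, slice k.+1 b & b ord0 k < x ord0 k < a ord0 k].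
Proof.
have e_neq0 s : s != 0 -> s *: e != 0.
  by move=> s0; apply/eqP => /rowP/(_ k)/eqP; rewrite !mxE !eqxx mulr1 (negbTE s0).
move=> unsep; have [a Sa ak] := unsep _ (e_neq0 1 (oner_neq0 _)) (scale_delta_eq0 1).
have N1 : (-1 : R) != 0 by rewrite oppr_eq0 oner_eq0.
have [b Sb bk] := unsep _ (e_neq0 _ N1) (scale_delta_eq0 (-1)).
exists a, b; split => //.
move: ak bk; rewrite !dotZl !dot_deltal !mxE mul1r mulN1r oppr_gt0 !subr_gt0 subr_lt0.
by move=> -> ->.
Qed.

Lemma unseparated_step : unseparated k.+1 -> unseparated k.
Proof.
move=> unsep g g0 g_supp; apply: contrapT => nosep.
have gle z : slice k z -> dot g (z - x) <= 0.
  by move=> Sz; rewrite leNgt; apply/negP => gz; apply: nosep; exists z.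
pose A := [set slope g z | z in [set z | slice k.+1 z /\ x ord0 k < z ord0 k]].
have [a [b [Sa Sb bxa]]] := unseparated_straddle unsep.
have A_ub z : slice k.+1 z -> z ord0 k < x ord0 k -> ubound A (slope g z).
  by move=> Sz zk _ [y [Sy yk] <-]; apply: slope_le; rewrite ?zk.
(* The critical slope: [g - T e_k] is <= 0 on slice k.+1, against [unsep]. *)
pose T := sup A.
have slope_le_T z : slice k.+1 z -> x ord0 k < z ord0 k -> slope g z <= T.
  move=> Sz zk; apply: ub_le_sup; last by exists z.
  by exists (slope g b); apply: A_ub; case/andP: bxa.
have T_le_slope z : slice k.+1 z -> z ord0 k < x ord0 k -> T <= slope g z.
  move=> Sz zk; apply: ge_sup; last exact: A_ub.
  by exists (slope g a), a; split; case/andP: bxa.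
have c_neq0 : g - T *: e != 0.
  apply: contraNneq g0 => /subr0_eq gE.
  have T0 : T = 0 by have := g_supp k (leqnn _); rewrite gE !mxE !eqxx mulr1.
  by rewrite gE T0 scale0r.
have c_supp (i : 'I_d) : (k.+1 <= i)%N -> (g - T *: e) ord0 i = 0.
  by move=> ki; rewrite 2!mxE scale_delta_eq0 // g_supp ?subr0 // ltnW.
have [z Sz] := unsep _ c_neq0 c_supp.
rewrite dotBl dotZl dot_deltal !mxE subr_gt0 ltNge => /negP; apply.
case: (ltgtP (z ord0 k) (x ord0 k)) => zk.
- by rewrite -ler_ndivlMr ?subr_lt0 // T_le_slope.
- by rewrite -ler_pdivrMr ?subr_gt0 // slope_le_T.
- by rewrite zk subrr mulr0; apply: gle; apply: slice_succ.
Qed.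

End Step.

Lemma unseparated_mem k : (k <= d)%N -> slice k !=set0 -> unseparated k -> C x.
Proof.
elim: k => [_ [z [Cz zx]] _ | k IH kd _ unsep].
  by have -> : x = z by apply/rowP => i; rewrite zx.
pose k' := Ordinal kd.
have [a [b [Sa Sb bxa]]] := unseparated_straddle (k := k') unsep.
have [t _ St] := slice_crossing Sa Sb bxa.
exact: IH (ltnW kd) (ex_intro _ _ St) (unseparated_step (k := k') unsep).
Qed.

Lemma convex_mem_of_unseparated : C !=set0 ->
  (forall c, c != 0 -> exists2 z, C z & 0 < dot c (z - x)) -> C x.
Proof.
move=> [z Cz] sep; apply: (@unseparated_mem d) => //.
  by exists z; exact: slice_top.
by move=> c c0 _; have [y Cy cy] := sep c c0; exists y => //; exact: slice_top.
Qed.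

End Separation.

Section Covering.
Variables (R : realType) (p : normkind) (d : nat) (L : set 'rV[R]_d).

Definition covers r := forall y, exists u, L u /\ ball_p p u r y.

Variables (r : R) (cov_r : covers r).

Lemma covers_ge0 : 0 <= r.
Proof. by have [u [_ /(le_trans (pnorm_ge0 _ _))]] := cov_r 0. Qed.

Lemma covers_dot_gt0 t x c : 2 * r < t -> c != 0 ->
  exists2 u, (ball_p p x t `&` L) u & 0 < dot c (u - x).
Proof.
move=> rt /(exists_norming p)[w [w1 cw0 cw]].
pose s := t - r; pose y := x + s *: w.
have [u [Lu yu]] := cov_r y; rewrite /ball_p /= in yu.
have uE : u - x = s *: w - (y - u).
  by rewrite /y opprB opprD [RHS]addrC addrA subrK.
have s0 : 0 <= s by rewrite subr_ge0; have := covers_ge0; lra.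
exists u; first split => //.
  rewrite /ball_p /= uE (le_trans (pnormD _ _ _)) // pnormN pnormZ ger0_norm //.
  have : s * pnorm p w <= s by rewrite ler_piMr.
  rewrite /s; lra.
have cyu : dot c (y - u) <= dot c w * r.
  by apply: le_trans (cw _) _; apply: ler_wpM2l => //; exact: ltW.
rewrite uE dotBr dotZr /s; nra.
Qed.

Lemma conv_hull_ball_of_covers t x : 2 * r < t -> conv_hull (ball_p p x t `&` L) x.
Proof.
move=> rt; apply: convex_mem_of_unseparated; first exact: convex_conv_hull.
  have [u [Lu xu]] := cov_r x; exists u; apply: conv_hull_sub; split => //.
  rewrite /ball_p /= -opprB pnormN (le_trans xu) //; have := covers_ge0; lra.
move=> c c0; have [u Su cu] := covers_dot_gt0 x rt c0.
by exists u => //; exact: conv_hull_sub.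
Qed.

End Covering.

Theorem lemma13 (R : realType) (p : normkind) (d : nat) (B : 'M[R]_d) (eps : R) :
  0 < eps -> B \in unitmx -> eps_lattice p B eps ->
  forall x : 'rV[R]_d, conv_hull (ball_p p x (7 * eps) `&` lattice B) x.
Proof.
(* Only r_c <= 3 eps matters; eps <= r_c just excludes an empty set of
   covering radii, whose infimum would be the junk value 0. *)
move=> eps_gt0 _ [_ [eps_le_rc rc_le]] x.
have cov_nonempty : [set r | covers p (lattice B) r] !=set0.
  apply/set0P/eqP => cov0; move: eps_le_rc.
  by rewrite /cover_radius -/(covers p (lattice B)) cov0 inf0; lra.
have [r cov_r r_lt] : exists2 r, covers p (lattice B) r & r < 7 * eps / 2.
  by apply: inf_lt => //; apply: (le_lt_trans rc_le); lra.
by apply: (conv_hull_ball_of_covers cov_r); lra.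
Qed.
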